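(* Let $n\ge 3$ and $k\ge 1$ be integers, $a=nk+1$, $S=\{a\}\cup[2a-n,\,2a-2]$ and $G=\langle S\rangle$. For $i\in[0,k-1]$ let $A_{i,k}=\{(2i+1)a\}\cup[(2i+2)a-(i+1)n,\,(2i+2)a-2]$ and $B_{i,k}=\{(2i+2)a\}\cup[(2i+3)a-(i+1)n,\,(2i+3)a-2]$, and let $H=\{0\}\cup\bigcup_{i=0}^{k-1}(A_{i,k}\cup B_{i,k})\cup[2ka,\infty[$. Then: (1) $H$ is a numerical semigroup; (2) $G=H$; (3) $H$ is an $n$-permutation numerical semigroup.
   Context: $\mathbb{N}=\{0,1,2,\dots\}$. A numerical semigroup is a submonoid $G$ of $(\mathbb{N},+,0)$ with $\mathbb{N}\setminus G$ finite; $\langle S\rangle$ is the submonoid generated by $S$. Writing the elements of a numerical semigroup as $0=g_0<g_1<g_2<\cdots$, it is an $n$-permutation numerical semigroup if it is generated by $\{g_1,\dots,g_n\}$ and for every $m\in\mathbb{N}$ the tuple $(g_{mn+1}\bmod n,\dots,g_{mn+n}\bmod n)$ contains exactly one representative of each residue class of $\mathbb{Z}/n\mathbb{Z}$. Notation: $[u,v]=\{x\in\mathbb{N}:u\le x\le v\}$, $[u,\infty[=\{x\in\mathbb{N}:x\ge u\}$. *)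

From Stdlib Require Import Arith Lia.

Inductive gen (S : nat -> Prop) : nat -> Prop :=
| gen_zero : gen S 0
| gen_in : forall x, S x -> gen S x
| gen_add : forall x y, gen S x -> gen S y -> gen S (x + y).

Definition numerical_semigroup (G : nat -> Prop) : Prop :=
  G 0 /\ (forall x y, G x -> G y -> G (x + y)) /\
  (exists N, forall x, N <= x -> G x).

Definition enumerates (G : nat -> Prop) (g : nat -> nat) : Prop :=
  (forall i j, i < j -> g i < g j) /\ (forall x, G x <-> exists i, g i = x).

Definition n_permutation_ns (n : nat) (G : nat -> Prop) : Prop :=
  numerical_semigroup G /\
  exists g : nat -> nat, enumerates G g /\
    (forall x, G x <-> gen (fun y => exists j, 1 <= j <= n /\ y = g j) x) /\
    (forall m r, r < n ->
       exists j, (1 <= j <= n /\ g (m * n + j) mod n = r) /\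
         forall j', 1 <= j' <= n -> g (m * n + j') mod n = r -> j' = j).

Definition S_set (n k : nat) (x : nat) : Prop :=
  let a := n * k + 1 in x = a \/ (2 * a - n <= x <= 2 * a - 2).

Definition A_set (n k i : nat) (x : nat) : Prop :=
  let a := n * k + 1 in
  x = (2 * i + 1) * a \/
  ((2 * i + 2) * a - (i + 1) * n <= x <= (2 * i + 2) * a - 2).

Definition B_set (n k i : nat) (x : nat) : Prop :=
  let a := n * k + 1 in
  x = (2 * i + 2) * a \/
  ((2 * i + 3) * a - (i + 1) * n <= x <= (2 * i + 3) * a - 2).

Definition H_set (n k : nat) (x : nat) : Prop :=
  let a := n * k + 1 in
  x = 0 \/ (exists i, i <= k - 1 /\ (A_set n k i x \/ B_set n k i x)) \/
  2 * k * a <= x.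

From Stdlib Require Import Arith Lia.

(** Write x = q a + r with 0 <= r < a.  Then x lies in H iff q >= 2k, or r = 0, or
    a - ceil(q/2) n <= r <= a - 2.

    A sum of copies of a and of j elements of [2a - n, 2a - 2] has the form N a - d with
    2j <= N and 2j <= d <= jn; conversely every such number is such a sum, and these numbers
    are exactly the elements of H.  This gives G = H, and hence closure of H under addition.

    Successive elements of H differ by 1 modulo n, except across the missing numbers
    q a + a - 1 (1 <= q < 2k), where they differ by 2: the jump from q a to
    q a + a - ceil(q/2) n is congruent to 1 because a = nk + 1.  The elements of H with
    quotient q are ceil(q/2) n in number, so every jump by 2 leaves an element whose index
    is a multiple of n, and the n elements of each block g_(mn+1), ..., g_(mn+n) have
    consecutive residues. *)

Definition ceil_half (q : nat) : nat := (q + 1) / 2.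

Lemma ceil_half_spec q : q <= 2 * ceil_half q <= q + 1.
Proof.
  unfold ceil_half.
  pose proof (Nat.div_mod (q + 1) 2 ltac:(lia)).
  pose proof (Nat.mod_upper_bound (q + 1) 2 ltac:(lia)).
  lia.
Qed.

Lemma mod_add_inj n v i j : i < n -> j < n -> (v + i) mod n = (v + j) mod n -> i = j.
Proof.
  intros hi hj e.
  pose proof (Nat.div_mod (v + i) n ltac:(lia)).
  pose proof (Nat.div_mod (v + j) n ltac:(lia)).
  set (qi := (v + i) / n) in *. set (qj := (v + j) / n) in *.
  destruct (lt_eq_lt_dec qi qj) as [[lt | ->] | lt]; [| lia |].
  - assert (n * (qi + 1) <= n * qj) by (apply Nat.mul_le_mono_l; lia). lia.
  - assert (n * (qj + 1) <= n * qi) by (apply Nat.mul_le_mono_l; lia). lia.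
Qed.

Lemma mod_add_surj n v r : r < n -> exists i, i < n /\ (v + i) mod n = r.
Proof.
  intros hr. exists ((r + (n - v mod n)) mod n). split; [apply Nat.mod_upper_bound; lia |].
  pose proof (Nat.mod_upper_bound v n ltac:(lia)).
  rewrite Nat.Div0.add_mod_idemp_r, <- Nat.Div0.add_mod_idemp_l.
  replace (v mod n + (r + (n - v mod n))) with (r + 1 * n) by lia.
  rewrite Nat.Div0.mod_add. now apply Nat.mod_small.
Qed.

Lemma part_count_exists n m d : 3 <= n -> 2 <= d <= m * n ->
  exists j, j <= m /\ 2 * j <= d <= j * n.
Proof.
  intros hn. induction m as [| m IH]; intros hd; [lia |].
  destruct (le_lt_dec d (m * n)) as [le | lt].
  - destruct (IH (conj (proj1 hd) le)) as [j hj]. exists j. lia.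
  - exists (S m). split; [lia |].
    assert (3 * m <= n * m) by (apply Nat.mul_le_mono_r; lia). lia.
Qed.

Lemma gen_mono (P Q : nat -> Prop) : (forall y, P y -> Q y) -> forall x, gen P x -> gen Q x.
Proof. intros hPQ x hx. induction hx; [apply gen_zero | apply gen_in, hPQ | apply gen_add]; auto. Qed.

Lemma gen_mul (P : nat -> Prop) y : P y -> forall e, gen P (e * y).
Proof. intros hy e. induction e; [apply gen_zero | apply gen_add; [apply gen_in |]; auto]. Qed.

Lemma gen_sum_interval (P : nat -> Prop) u v : u <= v -> (forall y, u <= y <= v -> P y) ->
  forall j x, j * u <= x <= j * v -> gen P x.
Proof.
  intros huv hP j. induction j as [| j IH]; intros x hx; simpl in hx.
  - replace x with 0 by lia. apply gen_zero.
  - assert (j * u <= j * v) by (apply Nat.mul_le_mono_l; lia).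
    destruct (le_lt_dec (x - j * u) v).
    + replace x with ((x - j * u) + j * u) by lia.
      apply gen_add; [apply gen_in, hP | apply IH]; lia.
    + replace x with (v + (x - v)) by lia.
      apply gen_add; [apply gen_in, hP | apply IH]; lia.
Qed.

Definition successor_in (P : nat -> Prop) (x y : nat) : Prop :=
  P y /\ x < y /\ forall z, x < z < y -> ~ P z.

Section Enumeration.
Variables (P : nat -> Prop) (next : nat -> nat).
Hypothesis P_0 : P 0.
Hypothesis next_successor : forall x, P x -> successor_in P x (next x).

Lemma iter_next_in t : P (Nat.iter t next 0).
Proof. induction t as [| t IH]; [exact P_0 | apply (next_successor _ IH)]. Qed.

Lemma iter_next_lt t : Nat.iter t next 0 < Nat.iter (S t) next 0.
Proof. apply (next_successor _ (iter_next_in t)). Qed.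

Lemma iter_next_ge t : t <= Nat.iter t next 0.
Proof. induction t as [| t IH]; [lia |]. pose proof (iter_next_lt t). lia. Qed.

Lemma iter_next_enumerates : enumerates P (fun t => Nat.iter t next 0).
Proof.
  assert (mono : forall i j, i < j -> Nat.iter i next 0 < Nat.iter j next 0).
  { intros i j hij. induction hij; [apply iter_next_lt |].
    pose proof (iter_next_lt m). lia. }
  split; [exact mono | intros x; split].
  - intros hx. enough (reach : forall t, x <= Nat.iter t next 0 -> exists s, Nat.iter s next 0 = x)
      by exact (reach x (iter_next_ge x)).
    induction t as [| t IH]; intros hxt; [exists 0; simpl in *; lia |].
    destruct (le_lt_dec x (Nat.iter t next 0)) as [le | lt]; [exact (IH le) |].
    exists (S t). destruct (next_successor _ (iter_next_in t)) as [_ [_ gap]].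
    destruct (Nat.eq_dec x (Nat.iter (S t) next 0)); [congruence |].
    exfalso. apply (gap x); [simpl in *; lia | exact hx].
  - intros [t <-]. apply iter_next_in.
Qed.

End Enumeration.

Section PermutationSemigroup.
Variables n k : nat.
Local Notation a := (n * k + 1).

Lemma divmod_exists x : exists q r, r < a /\ x = q * a + r.
Proof.
  exists (x / a), (x mod a). split.
  - apply Nat.mod_upper_bound; lia.
  - pose proof (Nat.div_mod x a ltac:(lia)). lia.
Qed.

Lemma divmod_unique q r : r < a -> (q * a + r) / a = q /\ (q * a + r) mod a = r.
Proof.
  intro hr. split; symmetry.
  - apply (Nat.div_unique _ _ _ r); lia.
  - apply (Nat.mod_unique _ _ q); lia.
Qed.

Lemma divmod_inj q r q' r' : r < a -> r' < a -> q * a + r = q' * a + r' -> q = q' /\ r = r'.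
Proof.
  intros hr hr' e.
  destruct (divmod_unique q r hr) as [eq er]. destruct (divmod_unique q' r' hr') as [eq' er'].
  rewrite e in eq, er. split; congruence.
Qed.

Hypothesis hn : 3 <= n.
Hypothesis hk : 1 <= k.

Lemma H_set_0 : H_set n k 0.
Proof. now left. Qed.

Lemma H_set_far x : 2 * k * a <= x -> H_set n k x.
Proof. intros hx. unfold H_set; cbv zeta. right; right. exact hx. Qed.

Lemma H_set_of_divmod q r : r < a ->
  2 * k <= q \/ r = 0 \/ a - ceil_half q * n <= r <= a - 2 ->
  H_set n k (q * a + r).
Proof.
  intros hr hqr.
  destruct (le_lt_dec (2 * k) q) as [far | near].
  { apply H_set_far. assert (2 * k * a <= q * a) by (apply Nat.mul_le_mono_r; lia). lia. }
  unfold H_set, A_set, B_set; cbv zeta.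
  pose proof (ceil_half_spec q) as hc.
  destruct (Nat.Even_or_Odd q) as [[m ->] | [m ->]].
  - assert (ceil_half (2 * m) = m) as e by lia. rewrite e in hqr.
    destruct m as [| i]; [left; lia |].
    right; left. exists i. split; [lia |]. right. lia.
  - assert (ceil_half (2 * m + 1) = m + 1) as e by lia. rewrite e in hqr.
    right; left. exists m. split; [lia |]. left. lia.
Qed.

Lemma divmod_of_H_set q r : r < a -> H_set n k (q * a + r) ->
  2 * k <= q \/ r = 0 \/ a - ceil_half q * n <= r <= a - 2.
Proof.
  intros hr hx. unfold H_set, A_set, B_set in hx; cbv zeta in hx.
  destruct hx as [zero | [[i [hi [[ha | ha] | [hb | hb]]]] | far]].
  - lia.
  - right; left. apply (divmod_inj q r (2 * i + 1) 0); lia.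
  - assert ((i + 1) * n <= k * n) by (apply Nat.mul_le_mono_r; lia).
    destruct (divmod_inj q r (2 * i + 1) (q * a + r - (2 * i + 1) * a)) as [-> ->]; [lia .. |].
    right; right. pose proof (ceil_half_spec (2 * i + 1)).
    assert (ceil_half (2 * i + 1) = i + 1) as -> by lia. lia.
  - right; left. apply (divmod_inj q r (2 * i + 2) 0); lia.
  - assert ((i + 1) * n <= k * n) by (apply Nat.mul_le_mono_r; lia).
    destruct (divmod_inj q r (2 * i + 2) (q * a + r - (2 * i + 2) * a)) as [-> ->]; [lia .. |].
    right; right. pose proof (ceil_half_spec (2 * i + 2)).
    assert (ceil_half (2 * i + 2) = i + 1) as -> by lia. lia.
  - left. destruct (le_lt_dec (2 * k) q) as [| near]; [assumption |].
    assert ((q + 1) * a <= 2 * k * a) by (apply Nat.mul_le_mono_r; lia). lia.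
Qed.

(* [S_sum x]: x is the sum of N - 2j copies of a and of j elements of [2a - n, 2a - 2],
   the latter adding up to 2ja - d. *)
Definition S_sum (x : nat) : Prop :=
  exists N j d, x + d = N * a /\ 2 * j <= N /\ 2 * j <= d <= j * n.

Lemma gen_S_sum x : gen (S_set n k) x -> S_sum x.
Proof.
  induction 1 as [| x hx | x y _ [N [j [d hx]]] _ [N' [j' [d' hy]]]].
  - exists 0, 0, 0. lia.
  - destruct hx as [-> | hx].
    + exists 1, 0, 0. lia.
    + exists 2, 1, (2 * a - x). lia.
  - exists (N + N'), (j + j'), (d + d'). lia.
Qed.

Lemma S_sum_gen x : S_sum x -> gen (S_set n k) x.
Proof.
  intros [N [j [d [ex [hN hd]]]]].
  assert (j * n <= j * a) by (apply Nat.mul_le_mono_l; nia).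
  replace N with ((N - 2 * j) + 2 * j) in ex by lia.
  set (e := N - 2 * j) in ex. clearbody e.
  replace x with (e * a + (x - e * a)) by lia. apply gen_add.
  - apply gen_mul. now left.
  - apply (gen_sum_interval _ (2 * a - n) (2 * a - 2)) with (j := j); [lia | now right |].
    rewrite !Nat.mul_sub_distr_l. lia.
Qed.

Lemma S_sum_H_set x : S_sum x -> H_set n k x.
Proof.
  intros [N [j [d [ex [hN hd]]]]].
  destruct (le_lt_dec N (2 * k)) as [near | far].
  - destruct (Nat.eq_dec d 0) as [-> | hd0].
    + replace x with (N * a + 0) by lia. apply H_set_of_divmod; lia.
    + assert (1 <= j) by (destruct j; simpl in hd; lia).
      destruct N as [| N]; [lia |].
      assert (j * n <= ceil_half N * n)
        by (pose proof (ceil_half_spec N); apply Nat.mul_le_mono_r; lia).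
      assert (j * n <= k * n) by (apply Nat.mul_le_mono_r; lia).
      replace x with (N * a + (a - d)) by lia. apply H_set_of_divmod; lia.
  - apply H_set_far. destruct (le_lt_dec j k) as [small | large].
    + assert (j * n <= k * n) by (apply Nat.mul_le_mono_r; lia).
      assert ((2 * k + 1) * a <= N * a) by (apply Nat.mul_le_mono_r; lia). lia.
    + assert ((k + 1) * (2 * a - n) <= j * (2 * a - n)) by (apply Nat.mul_le_mono_r; lia).
      assert (j * n <= j * a) by (apply Nat.mul_le_mono_l; nia).
      rewrite !Nat.mul_sub_distr_l in *. nia.
Qed.

Lemma H_set_S_sum x : H_set n k x -> S_sum x.
Proof.
  destruct (divmod_exists x) as [q [r [hr ->]]].
  intros hx. apply divmod_of_H_set in hx; [| exact hr].
  destruct (Nat.eq_dec r 0) as [-> | hr0].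
  { exists q, 0, 0. lia. }
  destruct (Nat.eq_dec r (a - 1)) as [-> | hr1].
  - destruct (part_count_exists n (k + 1) (a + 1)) as [j hj]; [lia | nia |].
    exists (q + 2), j, (a + 1). lia.
  - assert (exists m, 2 * m <= q + 1 /\ a - r <= m * n) as [m [hmq hmr]].
    { destruct (le_lt_dec (2 * k) q).
      - exists k. lia.
      - exists (ceil_half q). pose proof (ceil_half_spec q). lia. }
    destruct (part_count_exists n m (a - r)) as [j hj]; [lia | lia |].
    exists (q + 1), j, (a - r). lia.
Qed.

Lemma gen_S_set_iff_H_set x : gen (S_set n k) x <-> H_set n k x.
Proof.
  split; intros hx.
  - apply S_sum_H_set, gen_S_sum, hx.
  - apply S_sum_gen, H_set_S_sum, hx.
Qed.

Lemma H_set_numerical_semigroup : numerical_semigroup (H_set n k).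
Proof.
  split; [exact H_set_0 | split].
  - intros x y hx hy. apply gen_S_set_iff_H_set.
    apply gen_add; apply gen_S_set_iff_H_set; assumption.
  - exists (2 * k * a). exact H_set_far.
Qed.

Lemma successor_far q r : r < a -> 2 * k <= q ->
  successor_in (H_set n k) (q * a + r) (q * a + r + 1).
Proof.
  intros hr hq. split; [| split; [lia | intros z hz; lia]].
  apply H_set_far. assert (2 * k * a <= q * a) by (apply Nat.mul_le_mono_r; lia). lia.
Qed.

Lemma successor_block_start q : q < 2 * k ->
  successor_in (H_set n k) (q * a) (q * a + (a - ceil_half q * n)).
Proof.
  intros hq. pose proof (ceil_half_spec q).
  assert (ceil_half q * n <= k * n) by (apply Nat.mul_le_mono_r; lia).
  split; [| split].
  - destruct (Nat.eq_dec q 0) as [-> | hq0].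
    + replace (0 * a + (a - ceil_half 0 * n)) with (1 * a + 0) by (simpl; lia).
      apply H_set_of_divmod; lia.
    + assert (1 * n <= ceil_half q * n) by (apply Nat.mul_le_mono_r; lia).
      apply H_set_of_divmod; lia.
  - lia.
  - intros z hz hzH. replace z with (q * a + (z - q * a)) in hzH by lia.
    apply divmod_of_H_set in hzH; lia.
Qed.

Lemma successor_gap q : q < 2 * k ->
  successor_in (H_set n k) (q * a + (a - 2)) ((q + 1) * a).
Proof.
  intros hq. split; [| split].
  - replace ((q + 1) * a) with ((q + 1) * a + 0) by lia. apply H_set_of_divmod; lia.
  - lia.
  - intros z hz hzH. replace z with (q * a + (a - 1)) in hzH by lia.
    apply divmod_of_H_set in hzH; lia.
Qed.

Lemma successor_inner q r : q < 2 * k -> a - ceil_half q * n <= r -> r + 2 < a ->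
  successor_in (H_set n k) (q * a + r) (q * a + r + 1).
Proof.
  intros hq hlo hhi. split; [| split; [lia | intros z hz; lia]].
  replace (q * a + r + 1) with (q * a + (r + 1)) by lia. apply H_set_of_divmod; lia.
Qed.

Definition jump (q r : nat) : nat :=
  if 2 * k <=? q then 1
  else if r =? 0 then a - ceil_half q * n
  else if r =? a - 2 then 2
  else 1.

Definition H_next (x : nat) : nat := x + jump (x / a) (x mod a).

Lemma H_next_divmod q r : r < a -> H_next (q * a + r) = q * a + r + jump q r.
Proof. intros hr. unfold H_next. now destruct (divmod_unique q r hr) as [-> ->]. Qed.

Lemma H_next_0 : H_next 0 = a.
Proof.
  replace 0 with (0 * a + 0) at 1 by lia.
  rewrite H_next_divmod by lia. unfold jump.
  destruct (Nat.leb_spec (2 * k) 0); [lia |].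
  rewrite Nat.eqb_refl. unfold ceil_half. simpl. lia.
Qed.

Lemma H_next_successor x : H_set n k x -> successor_in (H_set n k) x (H_next x).
Proof.
  destruct (divmod_exists x) as [q [r [hr ->]]]. intros hx.
  apply divmod_of_H_set in hx; [| exact hr].
  rewrite H_next_divmod by exact hr. unfold jump.
  destruct (Nat.leb_spec (2 * k) q); [now apply successor_far |].
  destruct (Nat.eqb_spec r 0) as [-> | hr0].
  { rewrite !Nat.add_0_r. now apply successor_block_start. }
  destruct (Nat.eqb_spec r (a - 2)) as [-> | hr2].
  { replace (q * a + (a - 2) + 2) with ((q + 1) * a) by lia. now apply successor_gap. }
  apply successor_inner; lia.
Qed.

Definition H_enum (t : nat) : nat := Nat.iter t H_next 0.

Lemma H_enum_enumerates : enumerates (H_set n k) H_enum.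
Proof. exact (iter_next_enumerates _ _ H_set_0 H_next_successor). Qed.

Lemma H_enum_in t : H_set n k (H_enum t).
Proof. exact (iter_next_in _ _ H_set_0 H_next_successor t). Qed.

Lemma H_enum_ge t : t <= H_enum t.
Proof. exact (iter_next_ge _ _ H_set_0 H_next_successor t). Qed.

Definition level (x : nat) : nat := Nat.min (x / a) (2 * k).

Definition before_gap (x : nat) : Prop := exists q, q < 2 * k /\ x = q * a + (a - 2).

(* For x in H with x >= 1, level x - 1 is the number of jumps by 2 below x, and
   (n - 1) * level x stands for - level x modulo n. *)
Definition potential (x : nat) : nat := x + (n - 1) * level x + 1.

Lemma level_divmod q r : r < a -> level (q * a + r) = Nat.min q (2 * k).
Proof. intros hr. unfold level. now rewrite (proj1 (divmod_unique q r hr)). Qed.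

Lemma level_far x : 2 * k * a <= x -> level x = 2 * k.
Proof. intros hx. apply Nat.min_r, Nat.div_le_lower_bound; lia. Qed.

Lemma H_next_view x : H_set n k x -> 1 <= x ->
  before_gap x \/ (H_next x mod n = (x + 1) mod n /\ level (H_next x) = level x).
Proof.
  destruct (divmod_exists x) as [q [r [hr ->]]]. intros hx hx1.
  apply divmod_of_H_set in hx; [| exact hr].
  rewrite H_next_divmod by exact hr. unfold jump.
  destruct (Nat.leb_spec (2 * k) q).
  { right. split; [reflexivity |].
    assert (2 * k * a <= q * a) by (apply Nat.mul_le_mono_r; lia).
    rewrite !level_far by lia. reflexivity. }
  destruct (Nat.eqb_spec r 0) as [-> | hr0].
  - right. assert (1 <= q) by (destruct q; lia).
    pose proof (ceil_half_spec q).
    assert (ceil_half q * n <= k * n) by (apply Nat.mul_le_mono_r; lia).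
    assert (1 * n <= ceil_half q * n) by (apply Nat.mul_le_mono_r; lia).
    split.
    + replace (q * a + 0 + (a - ceil_half q * n)) with (q * a + 0 + 1 + (k - ceil_half q) * n)
        by (rewrite Nat.mul_sub_distr_r; lia).
      apply Nat.Div0.mod_add.
    + rewrite <- Nat.add_assoc, !level_divmod by lia. reflexivity.
  - destruct (Nat.eqb_spec r (a - 2)) as [-> | hr2]; [left; now exists q |].
    right. split; [reflexivity |].
    rewrite <- Nat.add_assoc, !level_divmod by lia. reflexivity.
Qed.

Lemma H_next_before_gap x : before_gap x ->
  H_next x = x + 2 /\ level (H_next x) = level x + 1.
Proof.
  intros [q [hq ->]]. rewrite H_next_divmod by lia. unfold jump.
  destruct (Nat.leb_spec (2 * k) q); [lia |].
  destruct (Nat.eqb_spec (a - 2) 0); [nia |].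
  rewrite Nat.eqb_refl. split; [reflexivity |].
  replace (q * a + (a - 2) + 2) with ((q + 1) * a + 0) by lia.
  rewrite !level_divmod by lia. lia.
Qed.

Lemma potential_before_gap x : before_gap x -> potential x mod n = 0.
Proof.
  intros [q [hq ->]]. unfold potential. rewrite level_divmod by lia.
  replace (Nat.min q (2 * k)) with q by lia.
  replace (q * a + (a - 2) + (n - 1) * q + 1) with ((q * k + k + q) * n)
    by (rewrite Nat.mul_sub_distr_r; nia).
  apply Nat.Div0.mod_mul.
Qed.

Lemma potential_H_next x : H_set n k x -> 1 <= x ->
  potential (H_next x) mod n = (potential x + 1) mod n.
Proof.
  intros hx hx1. unfold potential.
  destruct (H_next_view x hx hx1) as [gap | [emod elev]].
  - destruct (H_next_before_gap x gap) as [-> ->].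
    replace (x + 2 + (n - 1) * (level x + 1) + 1)
      with (x + (n - 1) * level x + 1 + 1 + 1 * n) by lia.
    apply Nat.Div0.mod_add.
  - rewrite elev, <- !Nat.add_assoc, <- Nat.Div0.add_mod_idemp_l, emod,
      Nat.Div0.add_mod_idemp_l.
    f_equal. lia.
Qed.

Lemma H_enum_potential t : 1 <= t -> potential (H_enum t) mod n = t mod n.
Proof.
  induction t as [| t IH]; intros ht; [lia |].
  destruct (Nat.eq_dec t 0) as [-> | ht0].
  - assert (level a = 1) as elev.
    { replace a with (1 * a + 0) at 1 by lia. rewrite level_divmod; lia. }
    unfold potential, H_enum. simpl. rewrite H_next_0, elev.
    replace (a + (n - 1) * 1 + 1) with (1 + (k + 1) * n) by lia.
    now rewrite Nat.Div0.mod_add.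
  - pose proof (H_enum_ge t).
    change (H_enum (S t)) with (H_next (H_enum t)).
    rewrite potential_H_next, <- Nat.Div0.add_mod_idemp_l, IH, Nat.Div0.add_mod_idemp_l
      by first [apply H_enum_in | lia].
    f_equal. lia.
Qed.

Lemma H_enum_step t : t mod n <> 0 -> H_enum (S t) mod n = (H_enum t + 1) mod n.
Proof.
  intros ht. assert (1 <= t) by (destruct t; [now rewrite Nat.Div0.mod_0_l in ht | lia]).
  pose proof (H_enum_ge t).
  destruct (H_next_view (H_enum t) (H_enum_in t)) as [gap | [emod _]]; [lia | | exact emod].
  exfalso. apply ht. rewrite <- H_enum_potential by lia. now apply potential_before_gap.
Qed.

Lemma H_enum_run m j : 1 <= j <= n ->
  H_enum (m * n + j) mod n = (H_enum (m * n + 1) + (j - 1)) mod n.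
Proof.
  induction j as [| j IH]; intros hj; [lia |].
  destruct (Nat.eq_dec j 0) as [-> | hj0]; [f_equal; lia |].
  assert ((m * n + j) mod n <> 0).
  { rewrite Nat.add_comm, Nat.Div0.mod_add, Nat.mod_small; lia. }
  replace (m * n + S j) with (S (m * n + j)) by lia.
  rewrite H_enum_step, <- Nat.Div0.add_mod_idemp_l, IH, Nat.Div0.add_mod_idemp_l
    by first [assumption | lia].
  f_equal. lia.
Qed.

Lemma H_enum_residues m r : r < n ->
  exists j, (1 <= j <= n /\ H_enum (m * n + j) mod n = r) /\
    forall j', 1 <= j' <= n -> H_enum (m * n + j') mod n = r -> j' = j.
Proof.
  intros hr. destruct (mod_add_surj n (H_enum (m * n + 1)) r hr) as [i [hi ei]].
  exists (i + 1). split.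
  - split; [lia |]. rewrite H_enum_run by lia. rewrite <- ei. f_equal. lia.
  - intros j' hj' ej'. rewrite H_enum_run in ej' by lia.
    enough (j' - 1 = i) by lia.
    apply (mod_add_inj n (H_enum (m * n + 1))); lia.
Qed.

Lemma H_enum_initial j : 2 <= j <= n -> H_enum j = 2 * a - n + (j - 2).
Proof.
  induction j as [| j IH]; intros hj; [lia |].
  assert (n <= n * k) by nia.
  change (H_enum (S j)) with (H_next (H_enum j)).
  destruct (Nat.eq_dec j 1) as [-> | hj1].
  - change (H_enum 1) with (H_next 0). rewrite H_next_0.
    replace a with (1 * a + 0) at 1 by lia. rewrite H_next_divmod by lia. unfold jump.
    destruct (Nat.leb_spec (2 * k) 1); [lia |]. rewrite Nat.eqb_refl.
    replace (ceil_half 1) with 1 by reflexivity. lia.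
  - rewrite IH by lia.
    replace (2 * a - n + (j - 2)) with (1 * a + (a - n + (j - 2))) by lia.
    rewrite H_next_divmod by lia. unfold jump.
    destruct (Nat.leb_spec (2 * k) 1); [lia |].
    destruct (Nat.eqb_spec (a - n + (j - 2)) 0); [lia |].
    destruct (Nat.eqb_spec (a - n + (j - 2)) (a - 2)); lia.
Qed.

Lemma S_set_iff_H_enum y : S_set n k y <-> exists j, 1 <= j <= n /\ y = H_enum j.
Proof.
  assert (n <= n * k) by nia.
  assert (H_enum 1 = a) by exact H_next_0.
  split.
  - intros [-> | hy].
    + exists 1. split; [lia | congruence].
    + exists (y - (2 * a - n) + 2). split; [lia |]. rewrite H_enum_initial; lia.
  - intros [j [hj ->]]. destruct (Nat.eq_dec j 1) as [-> | hj1]; [now left |].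
    right. rewrite H_enum_initial; lia.
Qed.

End PermutationSemigroup.

Theorem lemma5p2 (n k : nat) (hn : 3 <= n) (hk : 1 <= k) :
  numerical_semigroup (H_set n k) /\
  (forall x, gen (S_set n k) x <-> H_set n k x) /\
  n_permutation_ns n (H_set n k).
Proof.
  pose proof (H_set_numerical_semigroup n k hn hk) as semigroup.
  pose proof (gen_S_set_iff_H_set n k hn hk) as gen_S_H.
  split; [exact semigroup | split; [exact gen_S_H |]].
  split; [exact semigroup |].
  exists (H_enum n k). split; [exact (H_enum_enumerates n k hn hk) | split].
  - intros x. rewrite <- gen_S_H.
    split; apply gen_mono; intros y; apply (S_set_iff_H_enum n k hn hk).
  - intros m r hr. exact (H_enum_residues n k hn hk m r hr).
Qed.
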